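(* Let $x\in\mathbb{R}^n$ and $\widehat{L}=L-P_{T_z}LP_{T_x^\perp}$. Then $\widehat{L}$ has full column rank, $\widehat{L}^\top\widehat{L}$ is diagonal and invertible, and $L^\top\widehat{L}=\widehat{L}^\top\widehat{L}$.
   Context: Let $n,N\in\mathbb{N}$, let $G_1,\dots,G_N\subseteq\{1,\dots,n\}$ be nonempty groups, possibly overlapping, with $\bigcup_iG_i=\{1,\dots,n\}$, and weights $w_i>0$. $x_G$ is the subvector of $x$ indexed by $G$ (increasing order). Let $p=\sum_i|G_i|$, partition $\{1,\dots,p\}$ into consecutive blocks $J_i=\{\sum_{j<i}|G_j|+1,\dots,\sum_{j\le i}|G_j|\}$, and define $L\in\mathbb{R}^{p\times n}$ by $(Lx)_{J_i}=w_ix_{G_i}$. For $x\in\mathbb{R}^n$: $\mathcal{I}_x=\{t:x_{G_t}\ne0\}$; $\mathcal{E}_x=\{1,\dots,n\}\setminus\bigcup_{t\notin\mathcal{I}_x}G_t$, $T_x=\{x'\in\mathbb{R}^n:\mathrm{supp}(x')\subseteq\mathcal{E}_x\}$; $\mathcal{E}_z=\bigcup_{t\in\mathcal{I}_x}J_t$, $T_z=\{z'\in\mathbb{R}^p:\mathrm{supp}(z')\subseteq\mathcal{E}_z\}$. $P_T$ is the orthogonal (coordinate) projection onto $T$ and $T^\perp$ its orthogonal complement. *)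

From HB Require Import structures.
From mathcomp Require Import all_boot all_order all_algebra.
Set Implicit Arguments. Unset Strict Implicit. Unset Printing Implicit Defensive.
Import Order.TTheory GRing.Theory Num.Theory.
Local Open Scope ring_scope.

Section GroupLasso.
Variables (R : realFieldType) (n N : nat).
Variables (G : 'I_N -> {set 'I_n}) (w : 'I_N -> R).

Notation p := (\sum_(i < N) #|G i|)%N.

(* Block i of L: the |G_i| x n matrix whose r-th row is w_i e_{g_r}^T, where
   g_0 < g_1 < ... are the elements of G_i in increasing order
   (enum of a finset of 'I_n lists elements in increasing order). *)
Definition Lblock (i : 'I_N) : 'M[R]_(#|G i|, n) :=
  \matrix_(r < #|G i|, c < n) (w i * ((@enum_val _ (mem (G i)) r == c)%:R)).

(* L : p x n, blocks J_i consecutive: (L x)_{J_i} = w_i x_{G_i}. *)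
Definition Lmat : 'M[R]_(p, n) := \mxcol_(i < N) Lblock i.

Definition Iset (x : 'cV[R]_n) : {set 'I_N} :=
  [set t | [exists j in G t, x j 0 != 0]].

Definition Ex (x : 'cV[R]_n) : {set 'I_n} :=
  ~: (\bigcup_(t | t \notin Iset x) G t).

(* Orthogonal projection onto T_x^perp = { x' | supp x' subset complement of E_x } *)
Definition P_Tx_perp (x : 'cV[R]_n) : 'M[R]_n :=
  diag_mx (\row_(j < n) (j \notin Ex x)%:R).

(* Orthogonal projection onto T_z = { z' | supp z' subset E_z },
   E_z = union_{t in I_x} J_t : block-diagonal with identity blocks on J_t, t in I_x. *)
Definition P_Tz (x : 'cV[R]_n) : 'M[R]_p :=
  \mxdiag_(i < N) (((i \in Iset x)%:R)%:M : 'M[R]_(#|G i|)).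

Definition Lhat (x : 'cV[R]_n) : 'M[R]_(p, n) :=
  Lmat - P_Tz x *m Lmat *m P_Tx_perp x.

End GroupLasso.

From HB Require Import structures.
From mathcomp Require Import all_boot all_order all_algebra.

Set Implicit Arguments.
Unset Strict Implicit.
Unset Printing Implicit Defensive.
Import Order.TTheory GRing.Theory Num.Theory.
Local Open Scope ring_scope.

(* Every row of L has exactly one nonzero entry, and L-hat is obtained from L
   by zeroing some of these entries, namely those of a block t in I_x lying in
   a column outside E_x.  So the columns of L-hat have disjoint supports, which
   makes L-hat^T L-hat diagonal and equal to L^T L-hat.  Each column j of
   L-hat keeps a nonzero entry: if j is in E_x any group containing j will do,
   and otherwise j lies in some group G_t with t outside I_x, whose block is
   left untouched.  Hence the diagonal of L-hat^T L-hat is positive. *)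

Definition disjoint_col_supports (R : pzSemiRingType) p n (A : 'M[R]_(p, n)) :=
  forall k a b, a != b -> A k a * A k b = 0.

Section DisjointColumns.
Variables (R : pzSemiRingType) (p n : nat).
Implicit Types (A B : 'M[R]_(p, n)) (m : 'I_p -> 'I_n -> bool).

Lemma gram_diag_disjoint A : disjoint_col_supports A -> is_diag_mx (A^T *m A).
Proof.
move=> Adisj; apply/is_diag_mxP => a b neq_ab; rewrite !mxE.
by apply: big1 => k _; rewrite mxE Adisj.
Qed.

Lemma mask_disjoint A B m :
  (forall k j, A k j = B k j *+ m k j) ->
  disjoint_col_supports B -> disjoint_col_supports A.
Proof.
by move=> AE Bdisj k a b neq_ab; rewrite !AE mulrnAl mulrnAr Bdisj ?mul0rn.
Qed.

Lemma trmx_mul_mask A B m :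
  (forall k j, A k j = B k j *+ m k j) ->
  disjoint_col_supports B -> B^T *m A = A^T *m A.
Proof.
move=> AE Bdisj; have Adisj := mask_disjoint AE Bdisj.
apply/matrixP => a b; rewrite !mxE; apply: eq_bigr => k _; rewrite !mxE.
have [<-|neq_ab] := eqVneq a b; last by rewrite Adisj // AE mulrnAr Bdisj ?mul0rn.
by rewrite !AE; case: (m k a); rewrite ?mulr0n ?mulr1n ?mulr0.
Qed.

End DisjointColumns.

Lemma gram_diag_gt0 (R : realDomainType) p n (A : 'M[R]_(p, n)) j k :
  A k j != 0 -> 0 < (A^T *m A) j j.
Proof.
move=> Akj_neq0; rewrite !mxE (bigD1 k) //= mxE -expr2 ltr_pwDl //.
  by rewrite lt0r sqrf_eq0 Akj_neq0 sqr_ge0.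
by apply: sumr_ge0 => i _; rewrite mxE -expr2 sqr_ge0.
Qed.

Lemma diag_unitmx (R : comUnitRingType) n (M : 'M[R]_n) :
  is_diag_mx M -> (forall j, M j j \is a GRing.unit) -> M \in unitmx.
Proof.
by move=> Mdiag Munit; rewrite unitmxE det_trig ?is_diag_mx_is_trig ?unitr_prod.
Qed.

Lemma rank_gram_unitmx (F : fieldType) p n (A : 'M[F]_(p, n)) :
  A^T *m A \in unitmx -> \rank A = n.
Proof.
move=> AtA_unit; apply/eqP; rewrite eqn_leq rank_leq_col /=.
by rewrite -{1}(mxrank_unit AtA_unit) mxrankM_maxr.
Qed.

Section GroupLasso.
Variables (R : realFieldType) (n N : nat).
Variables (G : 'I_N -> {set 'I_n}) (w : 'I_N -> R) (x : 'cV[R]_n).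

Lemma LmatE k j :
  Lmat G w k j = w (tagnat.sig1 k) * (enum_val (tagnat.sig2 k) == j)%:R.
Proof. by rewrite !mxE. Qed.

Lemma Lmat_disjoint : disjoint_col_supports (Lmat G w).
Proof.
move=> k a b neq_ab; rewrite !LmatE; set g := enum_val _.
have [->|_] := eqVneq g a; last by rewrite !mulr0 mul0r.
by rewrite (negbTE neq_ab) !mulr0.
Qed.

Definition kept (i : 'I_N) (j : 'I_n) : bool := (i \notin Iset G x) || (j \in Ex G x).

Lemma LhatE k j : Lhat G w x k j = Lmat G w k j *+ kept (tagnat.sig1 k) j.
Proof.
rewrite /Lhat /P_Tx_perp [in X in _ - X]/Lmat /P_Tz mul_mxdiag_mxcol.
under eq_mxcol do rewrite mul_scalar_mx.
rewrite mul_mx_diag !mxE -LmatE /kept.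
by case: (_ \in Iset _ _); case: (j \in _); rewrite ?mul1r ?mulr1 ?mul0r ?mulr0 ?subrr ?subr0.
Qed.

Lemma Lhat_disjoint : disjoint_col_supports (Lhat G w x).
Proof. by apply: mask_disjoint Lmat_disjoint => k j; apply: LhatE. Qed.

Lemma trmx_Lmat_mul_Lhat : (Lmat G w)^T *m Lhat G w x = (Lhat G w x)^T *m Lhat G w x.
Proof. by apply: trmx_mul_mask Lmat_disjoint => k j; apply: LhatE. Qed.

Lemma Lhat_col_neq0 j :
  \bigcup_(i < N) G i = [set: 'I_n] -> (forall i, 0 < w i) ->
  exists k, Lhat G w x k j != 0.
Proof.
move=> cover w_gt0.
have [i jGi kept_ij] : exists2 i, j \in G i & kept i j.
  have [jE|] := boolP (j \in Ex G x).
    have /bigcupP[i _ jGi] : j \in \bigcup_(i < N) G i by rewrite cover inE.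
    by exists i; rewrite // /kept jE orbT.
  by rewrite inE negbK => /bigcupP[t tI jGt]; exists t; rewrite // /kept tI.
exists (@tagnat.Rank _ (fun i => #|G i|) i (enum_rank_in jGi j)).
rewrite LhatE LmatE /tagnat.sig1 /tagnat.sig2 /tagnat.Rank tagnat.rankK /=.
by rewrite enum_rankK_in // eqxx kept_ij mulr1 mulr1n gt_eqF.
Qed.

End GroupLasso.

Theorem lemmaA4 (R : realFieldType) (n N : nat)
  (G : 'I_N -> {set 'I_n}) (w : 'I_N -> R)
  (hG : forall i, G i != set0)
  (hcover : \bigcup_(i < N) G i = [set: 'I_n])
  (hw : forall i, 0 < w i)
  (x : 'cV[R]_n) :
  let Lh := Lhat G w x in
  [/\ \rank Lh = n,
      is_diag_mx (Lh^T *m Lh),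
      Lh^T *m Lh \in unitmx
    & (Lmat G w)^T *m Lh = Lh^T *m Lh].
Proof.
move=> Lh.
have Lh_diag : is_diag_mx (Lh^T *m Lh) by exact/gram_diag_disjoint/Lhat_disjoint.
have Lh_unit : Lh^T *m Lh \in unitmx.
  apply: diag_unitmx Lh_diag _ => j; have [k Lhkj_neq0] := Lhat_col_neq0 x j hcover hw.
  by rewrite unitfE gt_eqF // (gram_diag_gt0 Lhkj_neq0).
split => //; first exact: rank_gram_unitmx.
exact: trmx_Lmat_mul_Lhat.
Qed.
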